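(* Let $n\ge1$, $\eta\in\mathbb{C}$, $\alpha\in\mathbb{C}\setminus\{0\}$, and let $$T(\lambda)=\begin{pmatrix}A(\lambda)&B(\lambda)\\ C(\lambda)&D(\lambda)\end{pmatrix}=\begin{pmatrix}\alpha\lambda^n+A_1\lambda^{n-1}+\dots+A_n & B_1\lambda^{n-1}+\dots+B_n\\ C_1\lambda^{n-1}+\dots+C_n & \alpha\lambda^n+D_1\lambda^{n-1}+\dots+D_n\end{pmatrix}$$ (i.e. leading coefficients $\alpha=\delta$, $\beta=\gamma=0$), with the $4n$ coefficients $A_i,B_i,C_i,D_i$ as coordinates, equipped with the bracket $\{\cdot,\cdot\}_1$ defined in the context. Then $$\{\operatorname{tr}T(\lambda),\operatorname{tr}T(\mu)\}_1=0$$ for all $\lambda,\mu$; equivalently, the coefficients $H_1,\dots,H_n$ of $\operatorname{tr}T(\lambda)=2\alpha\lambda^n+H_1\lambda^{n-1}+\dots+H_n$ pairwise Poisson commute with respect to $\{\cdot,\cdot\}_1$.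
   Context: Brackets are given by generating functions: the bracket of the coefficient of $\lambda^a$ in an entry $X(\lambda)$ with the coefficient of $\mu^b$ in an entry $Y(\mu)$ is the coefficient of $\lambda^a\mu^b$ in the (polynomial) right-hand side of the formula for $\{X(\lambda),Y(\mu)\}$; leading coefficients are constants; brackets extend by skew-symmetry and the Leibniz rule. For general constant leading coefficients $\alpha,\beta,\gamma,\delta$ ($\alpha\ne0$), the bracket $\{\cdot,\cdot\}_1$ is: $\{A(\lambda),A(\mu)\}_1=\{B(\lambda),B(\mu)\}_1=\{C(\lambda),C(\mu)\}_1=0$, $\{B(\lambda),A(\mu)\}_1=\frac{\eta}{\lambda-\mu}(\lambda B(\lambda)A(\mu)-\mu B(\mu)A(\lambda))-\frac{\eta\beta}{\alpha}A(\lambda)A(\mu)$, $\{C(\lambda),A(\mu)\}_1=\frac{-\eta}{\lambda-\mu}(\lambda C(\lambda)A(\mu)-\mu C(\mu)A(\lambda))+\frac{\eta\gamma}{\alpha}A(\lambda)A(\mu)$, $\{B(\lambda),C(\mu)\}_1=\frac{\eta}{\lambda-\mu}(\lambda D(\lambda)A(\mu)-\mu D(\mu)A(\lambda))-\frac{\eta\delta}{\alpha}A(\lambda)A(\mu)$, $\{B(\lambda),D(\mu)\}_1=\frac{-\eta\lambda}{\lambda-\mu}(B(\lambda)D(\mu)-B(\mu)D(\lambda))+\eta A(\lambda)\left(\frac{\beta}{\alpha}D(\mu)-\frac{\delta}{\alpha}B(\mu)\right)$, $\{C(\lambda),D(\mu)\}_1=\frac{\eta\lambda}{\lambda-\mu}(C(\lambda)D(\mu)-C(\mu)D(\lambda))-\eta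 A(\lambda)\left(\frac{\gamma}{\alpha}D(\mu)-\frac{\delta}{\alpha}C(\mu)\right)$, $\{A(\lambda),D(\mu)\}_1=\frac{\eta\lambda}{\lambda-\mu}(C(\lambda)B(\mu)-C(\mu)B(\lambda))-\eta A(\lambda)\left(\frac{\gamma}{\alpha}B(\mu)-\frac{\beta}{\alpha}C(\mu)\right)$, $\{D(\lambda),D(\mu)\}_1=\frac{\eta\gamma}{\alpha}(D(\lambda)B(\mu)-D(\mu)B(\lambda))-\frac{\eta\beta}{\alpha}(D(\lambda)C(\mu)-D(\mu)C(\lambda))+\frac{\eta\delta}{\alpha}(B(\lambda)C(\mu)-B(\mu)C(\lambda))$. In the claim these are used with $\delta=\alpha$, $\beta=\gamma=0$. *)

From HB Require Import structures.
From mathcomp Require Import all_boot all_order all_algebra.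
From mathcomp Require Import mpoly.
Set Implicit Arguments. Unset Strict Implicit. Unset Printing Implicit Defensive.
Import Order.TTheory GRing.Theory Num.Theory.
Local Open Scope ring_scope.

Section Bracket.
Variables (K : fieldType) (n : nat).
(* Coordinate ring: polynomials in the 4n coordinates.  Variable number
   X*n + k  (X = 0,1,2,3 for A,B,C,D; k < n) is the coordinate X_{k+1}. *)
Local Notation P := {mpoly K[4 * n]}.

Lemma var_subproof (X : 'I_4) (k : 'I_n) : (X * n + k < 4 * n)%N.
Proof.
case: X k => [X HX] [k Hk] /=.
have : (X * n + k < X * n + n)%N by rewrite ltn_add2l.
move/leq_trans; apply; rewrite -mulSnr leq_mul2r HX orbT.
by [].
Qed.

Definition var (X : 'I_4) (k : 'I_n) : 'I_(4 * n) := Ordinal (var_subproof X k).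

(* kind of a coordinate (0=A,1=B,2=C,3=D) and the power of lambda it
   multiplies in its generating function: X_{k+1} multiplies lambda^(n-1-k). *)
Definition kind (a : 'I_(4 * n)) : nat := (a %/ n)%N.
Definition deg (a : 'I_(4 * n)) : nat := (n.-1 - a %% n)%N.

Definition entry (lc : K) (X : 'I_4) : {poly P} :=
  (lc%:MP)%:P * 'X^n + \sum_(k < n) ('X_(var X k))%:P * 'X^(n.-1 - k).

Variables (alpha beta gamma delta eta : K).

Definition Apol := entry alpha 0.
Definition Bpol := entry beta 1.
Definition Cpol := entry gamma 2.
Definition Dpol := entry delta 3.

(* Bivariate polynomials in (lambda, mu): outer variable lambda, inner mu. *)
Definition Lm (f : {poly P}) : {poly {poly P}} := f ^:P.  (* f(lambda) *)
Definition Mu (f : {poly P}) : {poly {poly P}} := f%:P.   (* f(mu) *)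
Definition lam : {poly {poly P}} := 'X.
Definition mu : {poly {poly P}} := ('X)%:P.
Definition cst (c : K) : {poly {poly P}} := ((c%:MP)%:P)%:P.

Definition dd1 (f g : {poly P}) : {poly {poly P}} :=
  Pdiv.Ring.rdivp (lam * Lm f * Mu g - mu * Mu f * Lm g) (lam - mu).
Definition dd2 (f g : {poly P}) : {poly {poly P}} :=
  Pdiv.Ring.rdivp (lam * (Lm f * Mu g - Mu f * Lm g)) (lam - mu).

Definition ent (X : nat) : {poly P} :=
  match X with 0 => Apol | 1 => Bpol | 2 => Cpol | _ => Dpol end.

(* Pairs (X,Y) for which {X(lambda), Y(mu)}_1 is given explicitly. *)
Definition listed (X Y : nat) : bool :=
  match X, Y with
  | 0, 0 | 1, 1 | 2, 2 | 1, 0 | 2, 0 | 1, 2 | 1, 3 | 2, 3 | 0, 3 | 3, 3 => true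
  | _, _ => false
  end.

(* Right-hand sides of the defining formulas for {X(lambda), Y(mu)}_1. *)
Definition GF (X Y : nat) : {poly {poly P}} :=
  let e := cst eta in
  let A := Apol in let B := Bpol in let C := Cpol in let D := Dpol in
  match X, Y with
  | 1, 0 => e * dd1 B A - e * cst (beta / alpha) * Lm A * Mu A
  | 2, 0 => - e * dd1 C A + e * cst (gamma / alpha) * Lm A * Mu A
  | 1, 2 => e * dd1 D A - e * cst (delta / alpha) * Lm A * Mu A
  | 1, 3 => - e * dd2 B D
            + e * Lm A * (cst (beta / alpha) * Mu D - cst (delta / alpha) * Mu B)
  | 2, 3 => e * dd2 C D
            - e * Lm A * (cst (gamma / alpha) * Mu D - cst (delta / alpha) * Mu C)
  | 0, 3 => e * dd2 C B
            - e * Lm A * (cst (gamma / alpha) * Mu B - cst (beta / alpha) * Mu C)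
  | 3, 3 => e * cst (gamma / alpha) * (Lm D * Mu B - Mu D * Lm B)
            - e * cst (beta / alpha) * (Lm D * Mu C - Mu D * Lm C)
            + e * cst (delta / alpha) * (Lm B * Mu C - Mu B * Lm C)
  | _, _ => 0
  end.

(* Bracket of two coordinates: coefficient of lambda^i mu^j of the
   generating function; unlisted pairs by skew-symmetry. *)
Definition brgen (a b : 'I_(4 * n)) : P :=
  let X := kind a in let Y := kind b in
  if listed X Y then ((GF X Y)`_(deg a))`_(deg b)
  else - ((GF Y X)`_(deg b))`_(deg a).

(* Extension to the whole coordinate ring by bilinearity and Leibniz rule. *)
Definition pb1 (f g : P) : P :=
  \sum_(a < 4 * n) \sum_(b < 4 * n) f^`M(a) * g^`M(b) * brgen a b.

End Bracket.

From HB Require Import structures.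
From mathcomp Require Import all_boot all_order all_algebra.
From mathcomp Require Import mpoly zify.
Set Implicit Arguments. Unset Strict Implicit. Unset Printing Implicit Defensive.
Import Order.TTheory GRing.Theory Num.Theory.
Local Open Scope ring_scope.

(* Write tr T = A + D.  Since {A, A}_1 = 0, the bracket {tr T(lambda), tr T(mu)}_1
   is {A(lambda), D(mu)} + {D(lambda), A(mu)} + {D(lambda), D(mu)}.  For
   beta = gamma = 0 and delta = alpha the first one is
   eta lambda (C(lambda) B(mu) - C(mu) B(lambda)) / (lambda - mu), the second is
   minus the first with lambda and mu exchanged, and their sum is therefore
   eta (C(lambda) B(mu) - C(mu) B(lambda)), which cancels the third one,
   eta (B(lambda) C(mu) - B(mu) C(lambda)).  Coefficientwise, every coefficient
   of tr T is either a constant or a sum A_k + D_k of two coordinates, so the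
   bracket of two of them is a coefficient of that vanishing combination. *)

Lemma coef_skew_swapXY (R : nzRingType) (X Y : {poly {poly R}}) i j :
  X - swapXY X + Y = 0 -> X`_i`_j - X`_j`_i + Y`_i`_j = 0.
Proof.
move/(congr1 (fun Z : {poly {poly R}} => Z`_i`_j)).
by rewrite !coefD !coefN coef_swapXY !coef0.
Qed.

Section Bivariate.
Variables (K : fieldType) (n : nat).
Local Notation P := {mpoly K[4 * n]}.
Local Notation lam := (@lam K n).
Local Notation mu := (@mu K n).

Lemma dd2_mul_subXY (f g : {poly P}) :
  dd2 f g * (lam - mu) = lam * (Lm f * Mu g - Mu f * Lm g).
Proof.
rewrite /dd2; set W := lam * _.
have /factor_theorem[Q ->] : root W 'X.
  have evalX (h : {poly P}) : h^:P.['X] = h by exact: comp_polyXr.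
  by rewrite /root /W /Lm /Mu /lam !hornerE !evalX subrr mulr0.
by rewrite Pdiv.RingMonic.rdivp_mull // monicXsubC.
Qed.

Lemma dd2_sub_swapXY (f g : {poly P}) :
  dd2 f g - swapXY (dd2 f g) = Lm f * Mu g - Mu f * Lm g.
Proof.
set Q := dd2 f g; set W := Lm f * Mu g - Mu f * Lm g.
have swapW : swapXY W = - W.
  by rewrite /W /Lm /Mu rmorphB !rmorphM /= !swapXY_polyC !swapXY_map_polyC opprB.
have swapQ : swapXY Q * (lam - mu) = mu * W.
  have /(congr1 swapXY) := dd2_mul_subXY f g.
  rewrite -/Q !rmorphM rmorphB /= swapW /lam /mu swapXY_X swapXY_Y.
  by move=> eqQ; apply: oppr_inj; rewrite -mulrN opprB eqQ mulrN.
apply: (monic_rreg (monicXsubC ('X : {poly P}))).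
by rewrite mulrBl dd2_mul_subXY swapQ -mulrBl mulrC.
Qed.

Lemma swapXY_cst (c : K) : swapXY (cst n c) = cst n c.
Proof. by rewrite /cst swapXY_polyC map_polyC. Qed.

End Bivariate.

Section Coordinates.
Variables (K : fieldType) (n : nat).
Local Notation P := {mpoly K[4 * n]}.

Lemma mderivXi (i j : 'I_(4 * n)) : ('X_i : P)^`M(j) = (i == j)%:R.
Proof.
rewrite mderivX mnm1E eq_sym; case: eqP => [->|_]; last by rewrite scale0r.
by rewrite scale1r -[X in (X - _)%MM]add0m addmK mpolyX0.
Qed.

Lemma sum_mderivXi (u : 'I_(4 * n)) (F : 'I_(4 * n) -> P) :
  \sum_a ('X_u : P)^`M(a) * F a = F u.
Proof.
rewrite (bigD1 u) //= mderivXi eqxx mul1r big1 ?addr0 // => a.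
by rewrite mderivXi eq_sym => /negbTE ->; rewrite mul0r.
Qed.

Lemma kind_var (X : 'I_4) (k : 'I_n) : kind (var X k) = X.
Proof.
have n_gt0 : (0 < n)%N := leq_ltn_trans (leq0n k) (ltn_ord k).
by rewrite /kind /= divnMDl // divn_small ?addn0.
Qed.

Lemma deg_var (X : 'I_4) (k : 'I_n) : deg (var X k) = (n.-1 - k)%N.
Proof. by rewrite /deg /= modnMDl modn_small. Qed.

Lemma coef_entry_var (lc : K) (X : 'I_4) (k : 'I_n) :
  (entry n lc X)`_(n.-1 - k) = 'X_(var X k).
Proof.
have k_lt_n := ltn_ord k.
rewrite /entry coefD coefCM coefXn (_ : (_ == n) = false); last by apply/negbTE; lia.
rewrite mulr0 add0r coef_sum (bigD1 k) //= coefCM coefXn eqxx mulr1 big1 ?addr0 //.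
move=> j /eqP neq_jk; rewrite coefCM coefXn (_ : (_ == _) = false) ?mulr0 //.
by apply/negbTE/eqP => eq_deg; apply/neq_jk/val_inj => /=; have := ltn_ord j; lia.
Qed.

Lemma coef_entry_ge (lc : K) (X : 'I_4) a : (n <= a)%N ->
  (entry n lc X)`_a = (if a == n then lc else 0)%:MP.
Proof.
move=> n_le_a; rewrite /entry coefD coefCM coefXn coef_sum big1 ?addr0.
  by case: eqP; rewrite ?mulr1 ?mulr0.
move=> j _; rewrite coefCM coefXn (_ : (_ == _) = false) ?mulr0 //.
by apply/negbTE; have := ltn_ord j; lia.
Qed.

Lemma coef_trace (alpha delta : K) a :
  (exists c, (Apol n alpha + Dpol n delta)`_a = c%:MP) \/
  (exists k : 'I_n, (Apol n alpha + Dpol n delta)`_a = 'X_(var 0 k) + 'X_(var 3 k)).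
Proof.
have [n_le_a | a_lt_n] := leqP n a.
  left; exists ((if a == n then alpha else 0) + (if a == n then delta else 0)).
  by rewrite mpolyCD coefD; congr (_ + _); exact: coef_entry_ge.
right; have k_lt_n : (n.-1 - a < n)%N by lia.
exists (Ordinal k_lt_n).
have a_eq : a = (n.-1 - Ordinal k_lt_n)%N by rewrite /=; lia.
by rewrite {1}a_eq coefD; congr (_ + _); exact: coef_entry_var.
Qed.

End Coordinates.

Section Bracket.
Variables (K : fieldType) (n : nat) (alpha beta gamma delta eta : K).
Local Notation P := {mpoly K[4 * n]}.
Local Notation pb := (pb1 alpha beta gamma delta eta).
Local Notation br := (brgen alpha beta gamma delta eta).

Lemma pb1_addl (f g h : P) : pb (f + g) h = pb f h + pb g h.
Proof.
rewrite /pb1 -big_split; apply: eq_bigr => a _.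
by rewrite -big_split; apply: eq_bigr => b _; rewrite mderivD !mulrDl.
Qed.

Lemma pb1_addr (f g h : P) : pb f (g + h) = pb f g + pb f h.
Proof.
rewrite /pb1 -big_split; apply: eq_bigr => a _.
by rewrite -big_split; apply: eq_bigr => b _; rewrite mderivD mulrDr mulrDl.
Qed.

Lemma pb1_Cl (c : K) (g : P) : pb c%:MP g = 0.
Proof. by rewrite /pb1 big1 // => a _; rewrite big1 // => b _; rewrite mderivC !mul0r. Qed.

Lemma pb1_Cr (f : P) (c : K) : pb f c%:MP = 0.
Proof. by rewrite /pb1 big1 // => a _; rewrite big1 // => b _; rewrite mderivC mulr0 mul0r. Qed.

Lemma pb1_X (u v : 'I_(4 * n)) : pb 'X_u 'X_v = br u v.
Proof.
rewrite /pb1; under eq_bigr => a _ do under eq_bigr => b _ do rewrite -mulrA.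
under eq_bigr => a _ do rewrite -big_distrr /= sum_mderivXi.
by rewrite sum_mderivXi.
Qed.

Lemma brgen_var_listed (X Y : 'I_4) (i j : 'I_n) : listed X Y ->
  br (var X i) (var Y j) = (GF n alpha beta gamma delta eta X Y)`_(n.-1 - i)`_(n.-1 - j).
Proof. by move=> XY; rewrite /brgen !kind_var !deg_var XY. Qed.

Lemma brgen_var_unlisted (X Y : 'I_4) (i j : 'I_n) : ~~ listed X Y ->
  br (var X i) (var Y j) = - (GF n alpha beta gamma delta eta Y X)`_(n.-1 - j)`_(n.-1 - i).
Proof. by move=> /negbTE XY; rewrite /brgen !kind_var !deg_var XY. Qed.

Lemma brgen_var_AA (i j : 'I_n) : br (var 0 i) (var 0 j) = 0.
Proof. by rewrite /brgen !kind_var /= !coef0. Qed.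

Lemma pb1_trace_vars (i j : 'I_n) :
  pb ('X_(var 0 i) + 'X_(var 3 i)) ('X_(var 0 j) + 'X_(var 3 j)) =
  (GF n alpha beta gamma delta eta 0 3)`_(n.-1 - i)`_(n.-1 - j)
  - (GF n alpha beta gamma delta eta 0 3)`_(n.-1 - j)`_(n.-1 - i)
  + (GF n alpha beta gamma delta eta 3 3)`_(n.-1 - i)`_(n.-1 - j).
Proof.
rewrite pb1_addl !pb1_addr !pb1_X brgen_var_AA add0r addrA.
by rewrite (@brgen_var_unlisted 3 0) // !brgen_var_listed.
Qed.

End Bracket.

Section Diagonal.
Variables (K : fieldType) (n : nat) (alpha eta : K).
Hypothesis alpha_neq0 : alpha != 0.
Local Notation GF := (GF n alpha 0 0 alpha eta).
Local Notation A := (Apol n alpha).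
Local Notation B := (Bpol n (0 : K)).
Local Notation C := (Cpol n (0 : K)).
Local Notation D := (Dpol n alpha).

Lemma cst_div0 : cst n (0 / alpha) = 0.
Proof. by rewrite mul0r /cst mpolyC0 !polyC0. Qed.

Lemma cst_divff : cst n (alpha / alpha) = 1.
Proof. by rewrite (divff alpha_neq0) /cst mpolyC1 !polyC1. Qed.

(* The [generalize] steps below matter: [move:] and [rewrite] match up to
   conversion, and comparing e.g. [Bpol] with [Cpol], or [0] with [1], unfolds
   them into multivariate polynomials, which takes forever. *)
Lemma GF_AD_diag : GF 0 3 = cst n eta * dd2 C B.
Proof.
change (GF 0 3) with (cst n eta * dd2 C B
  - cst n eta * Lm A * (cst n (0 / alpha) * Mu B - cst n (0 / alpha) * Mu C)).
rewrite cst_div0.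
generalize (cst n eta) (dd2 C B) (Lm A) (Mu B) (Mu C) => e q a b c.
by rewrite !mul0r subrr mulr0 subr0.
Qed.

Lemma GF_DD_diag : GF 3 3 = cst n eta * (Lm B * Mu C - Mu B * Lm C).
Proof.
change (GF 3 3) with (cst n eta * cst n (0 / alpha) * (Lm D * Mu B - Mu D * Lm B)
  - cst n eta * cst n (0 / alpha) * (Lm D * Mu C - Mu D * Lm C)
  + cst n eta * cst n (alpha / alpha) * (Lm B * Mu C - Mu B * Lm C)).
move: cst_div0 cst_divff.
generalize (cst n (0 / alpha)) (cst n (alpha / alpha)) (cst n eta)
  (Lm B * Mu C - Mu B * Lm C) (Lm D * Mu B - Mu D * Lm B) (Lm D * Mu C - Mu D * Lm C).
move=> z o e w x y z0 o1.
rewrite z0 !mulr0 !mul0r subrr add0r.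
by rewrite o1 mulr1.
Qed.

Lemma GF_AD_DD : GF 0 3 - swapXY (GF 0 3) + GF 3 3 = 0.
Proof.
rewrite GF_AD_diag GF_DD_diag.
rewrite rmorphM /= swapXY_cst -mulrBr dd2_sub_swapXY -mulrDr.
generalize (Lm B) (Mu B) (Lm C) (Mu C) => lB mB lC mC.
by rewrite [lC * _]mulrC [mC * _]mulrC -opprB addNr mulr0.
Qed.

End Diagonal.

Theorem proposition3 (C : numClosedFieldType) (n : nat) (eta alpha : C) :
  (1 <= n)%N -> alpha != 0 ->
  forall a b : nat,
    pb1 alpha 0 0 alpha eta
      ((Apol n alpha + Dpol n alpha)`_a) ((Apol n alpha + Dpol n alpha)`_b) = 0.
Proof.
move=> _ alpha_neq0 a b.
have [[c ->] | [k ->]] := coef_trace n alpha alpha a; first exact: pb1_Cl.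
have [[c ->] | [l ->]] := coef_trace n alpha alpha b; first exact: pb1_Cr.
rewrite pb1_trace_vars.
exact: coef_skew_swapXY (GF_AD_DD _ _ alpha_neq0).
Qed.
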